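(* Let $\mathbb{A}$ be a non-empty set and $\varphi:\mathbb{A}^+\to C$ a finite coloring. Then every periodic word $x=u^\omega$ with $u\in\mathbb{A}^+$ admits a shift invariant $\varphi$-ultra monochromatic factorization.
   Context: $T$ is the shift, $T(x_0x_1\cdots)=x_1x_2\cdots$. A factorization $z=V_0V_1V_2\cdots$ with all $V_i\in\mathbb{A}^+$ is $\varphi$-ultra monochromatic if there is $c\in C$ such that for all $k\ge1$, all $0\le n_1<\cdots<n_k$ and all permutations $\sigma$ of $\{1,\dots,k\}$, $\varphi(V_{n_{\sigma(1)}}\cdots V_{n_{\sigma(k)}})=c$. It is shift invariant if for every positive integer $j$ the induced factorization $T^j(z)=W_0W_1W_2\cdots$ with $|W_i|=|V_i|$ for all $i$ is also $\varphi$-ultra monochromatic (the color may depend on $j$). *)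

From mathcomp Require Import all_boot.
Set Implicit Arguments. Unset Strict Implicit. Unset Printing Implicit Defensive.

(* Infinite words over A are functions nat -> A; finite words are seq A;
   A^+ = nonempty seq A. *)

Definition shift (A : Type) (z : nat -> A) : nat -> A := fun i => z i.+1.

(* the periodic word u^omega (u nonempty; the default a0 is then irrelevant) *)
Definition omega (A : Type) (a0 : A) (u : seq A) : nat -> A :=
  fun i => nth a0 u (i %% size u).

Definition factor (A : Type) (z : nat -> A) (s l : nat) : seq A :=
  mkseq (fun k => z (s + k)) l.

Definition start (A : Type) (V : nat -> seq A) (n : nat) : nat :=
  \sum_(i < n) size (V i).

Definition is_factorization (A : Type) (z : nat -> A) (V : nat -> seq A) : Prop :=
  (forall i, 0 < size (V i)) /\
  (forall i, V i = factor z (start V i) (size (V i))).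

(* phi-ultra monochromatic: for all k >= 1, n_1 < ... < n_k (the list ns),
   and every permutation (the list ms, a rearrangement of ns),
   phi (V_{n_sigma(1)} ... V_{n_sigma(k)}) = c. *)
Definition ultra_mono (A : Type) (C : finType) (phi : seq A -> C)
    (V : nat -> seq A) : Prop :=
  exists c : C, forall ns ms : seq nat,
    ns != [::] -> sorted ltn ns -> perm_eq ms ns ->
    phi (flatten (map V ms)) = c.

Definition induced (A : Type) (z : nat -> A) (V : nat -> seq A) (j : nat) :
    nat -> seq A :=
  fun i => factor (iter j (@shift A) z) (start V i) (size (V i)).

Definition shift_inv_ultra_mono (A : Type) (C : finType) (phi : seq A -> C)
    (z : nat -> A) (V : nat -> seq A) : Prop :=
  is_factorization z V /\ ultra_mono phi V /\
  (forall j, 0 < j -> ultra_mono phi (induced z V j)).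

(* Take V_i = u^(m_i).  A concatenation of distinct blocks, in any order, is
   u^(sum of the m_i), and the factor of T^j(u^omega) at the same place is the
   j-th rotation of u raised to that power.  So it suffices that all finite sums
   of distinct m_i get one colour under n |-> (phi (rot_j u ^ n))_(j < |u|), a
   finite colouring: this is Hindman's theorem.  It follows from an idempotent
   ultrafilter p = p + p containing the cofinite sets, by choosing the m_i in
   successively smaller sets A* = {n in A | A - n in p}; such a p lies in any
   minimal closed subsemigroup of the remainder of beta N. *)

From mathcomp Require Import all_boot.
From mathcomp Require Import boolp classical_sets filter.

Set Implicit Arguments. Unset Strict Implicit. Unset Printing Implicit Defensive.
Local Open Scope classical_set_scope.

Lemma ultra_setC T (F : set_system T) (A : set T) :
  UltraFilter F -> F A -> ~ F (~` A).
Proof.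
move=> FU FA FnA; apply: (filter_not_empty F).
by rewrite -(setICr A); apply: filterI.
Qed.

Lemma ultra_of_setVsetC T (F : set_system T) :
  ProperFilter F -> (forall A, F A \/ F (~` A)) -> UltraFilter F.
Proof.
move=> FF FVC; split=> // G GF sFG; apply/seteqP; split=> [A GA|//].
case: (FVC A) => // /sFG GnA; exfalso.
by apply: (filter_not_empty G); rewrite -(setICr A); apply: filterI.
Qed.

Definition translate (A : set nat) (x : nat) : set nat := [set y | A (x + y)].

Definition ultra_add (p q : set_system nat) : set_system nat :=
  [set A | p [set x | q (translate A x)]].

Lemma translateD A x y : translate (translate A x) y = translate A (x + y).
Proof. by apply/funext => z; rewrite /translate /= addnA. Qed.

Lemma ultra_add_ultra p q :
  UltraFilter p -> UltraFilter q -> UltraFilter (ultra_add p q).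
Proof.
move=> pU qU; have addF : Filter (ultra_add p q).
  split; rewrite /ultra_add /=.
  - by apply: filterS _ filterT => x _; apply: filterT.
  - move=> A B /= pA pB; apply: filterS _ (filterI pA pB) => x [qA qB].
    exact: filterI qA qB.
  - move=> A B sAB /=; apply: filterS => x; apply: filterS => y; exact: sAB.
apply: ultra_of_setVsetC => [|A].
  split=> [|//]; rewrite /ultra_add /= => p0.
  apply: (filter_not_empty p); apply: filterS _ p0 => x.
  by rewrite /translate /=; apply: filter_not_empty.
case: (in_ultra_setVsetC [set x | q (translate A x)] pU) => [|pnA]; first by left.
right; rewrite /ultra_add /=; apply: filterS _ pnA => x /= nqA.
by case: (in_ultra_setVsetC (translate A x) qU).
Qed.

Lemma ultra_addA p q r :
  ultra_add (ultra_add p q) r = ultra_add p (ultra_add q r).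
Proof.
apply/funext => A; rewrite /ultra_add /=; congr p; apply/funext => x /=.
by congr q; apply/funext => y /=; rewrite translateD.
Qed.

Lemma eventually_ultra_add p q : Filter p -> \oo `<=` q -> \oo `<=` ultra_add p q.
Proof.
move=> pF sq A [N _ sNA]; rewrite /ultra_add /=.
apply: filterS _ filterT => x _; apply: sq.
by exists N => // n /= leNn; apply: sNA; rewrite /= (leq_trans leNn) ?leq_addl.
Qed.

(* A filter G stands for the closed set [ultra_over G] of ultrafilters, and
   [ultra_meet S] for the closure of a set S of ultrafilters. *)
Definition ultra_over (G p : set_system nat) : Prop := UltraFilter p /\ G `<=` p.

Definition ultra_meet (S : set (set_system nat)) : set_system nat :=
  [set A | forall p, S p -> p A].

Record semigroup_filter (G : set_system nat) : Prop := {
  semigroup_filter_proper : ProperFilter G;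
  semigroup_filter_eventually : \oo `<=` G;
  semigroup_filter_add : forall p q,
    ultra_over G p -> ultra_over G q -> G `<=` ultra_add p q }.

Lemma ultra_over_add G p q : semigroup_filter G ->
  ultra_over G p -> ultra_over G q -> ultra_over G (ultra_add p q).
Proof.
move=> sgG pG qG; split; last exact: semigroup_filter_add.
exact: ultra_add_ultra pG.1 qG.1.
Qed.

Lemma eventually_semigroup_filter : semigroup_filter \oo.
Proof.
split=> [|//|p q [pU sp] [qU sq]]; first exact: eventually_filter.
exact: eventually_ultra_add.
Qed.

Lemma semigroup_filter_bigcup (F : set (set_system nat)) :
  total_on F subset -> (forall X A, F X -> X A -> semigroup_filter X) ->
  (exists2 X, F X & semigroup_filter X) ->
  semigroup_filter (\bigcup_(X in F) X).
Proof.
move=> Ftot Fsg [X FX sgX]; have XF := semigroup_filter_proper sgX.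
split.
- split=> [[Y FY Y0]|].
    have YF := semigroup_filter_proper (Fsg _ _ FY Y0).
    exact: filter_not_empty Y0.
  split; first by exists X => //; apply: filterT.
  + move=> A B [Y1 FY1 Y1A] [Y2 FY2 Y2B].
    have Y1F := semigroup_filter_proper (Fsg _ _ FY1 Y1A).
    have Y2F := semigroup_filter_proper (Fsg _ _ FY2 Y2B).
    case: (Ftot _ _ FY1 FY2) => [sY12|sY21].
    * by exists Y2 => //; apply: filterI (sY12 _ Y1A) Y2B.
    * by exists Y1 => //; apply: filterI Y1A (sY21 _ Y2B).
  + move=> A B sAB [Y FY YA]; exists Y => //.
    by have YF := semigroup_filter_proper (Fsg _ _ FY YA); apply: filterS sAB YA.
- by move=> A /(semigroup_filter_eventually sgX) XA; exists X.
- move=> p q [pU sp] [qU sq] A [Y FY YA].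
  have sYU : Y `<=` \bigcup_(X in F) X := bigcup_sup FY.
  apply: (semigroup_filter_add (Fsg _ _ FY YA)) YA.
  + by split => // B /sYU /sp.
  + by split => // B /sYU /sq.
Qed.

Lemma exists_maximal_semigroup_filter : exists M, semigroup_filter M /\
  forall G, semigroup_filter G -> M `<=` G -> G `<=` M.
Proof.
have [|M [PM Mmax]] :=
  @Zorn_bigcup _ (fun G : set_system nat => G = set0 \/ semigroup_filter G).
  move=> F FP Ftot.
  have Fsg X A : F X -> X A -> semigroup_filter X.
    by move=> FX XA; case: (FP X FX) => // X0; rewrite X0 in XA.
  have [Fsg_ne|Fsg_none] := pselect (exists2 X, F X & semigroup_filter X).
    by right; apply: semigroup_filter_bigcup.
  left; apply/seteqP; split=> // A [X FX XA]; apply: Fsg_none.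
  by exists X => //; apply: Fsg XA.
have sgM : semigroup_filter M.
  case: PM => // M0; exfalso; apply: (Mmax \oo); last first.
    by right; exact: eventually_semigroup_filter.
  by rewrite M0; split=> // /(_ setT filterT).
exists M; split=> // G sgG sMG A GA; apply: contrapT => nMA.
by apply: (Mmax G); [split=> // sGM; apply/nMA/sGM | right].
Qed.

Lemma ultra_add_image_closed (G : set_system nat) x q : Filter G ->
  UltraFilter x ->
  ultra_over (ultra_meet [set ultra_add p x | p in ultra_over G]) q ->
  exists2 p, ultra_over G p & ultra_add p x = q.
Proof.
move=> GF xU [qU sq].
pose H := [set S | exists2 B, G B &
  exists2 A, q A & B `&` [set n | x (translate A n)] `<=` S].
have HF : ProperFilter H.
  split.
    move=> [B GB [A qA sB0]]; apply: (ultra_setC qU qA); apply: sq.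
    move=> _ [p [pU sGp] <-]; rewrite /ultra_add /=; apply: filterS _ (sGp _ GB).
    move=> n Bn; have [xA|//] := in_ultra_setVsetC (translate A n) xU.
    by case: (sB0 n (conj Bn xA)).
  split.
    by exists setT; [exact: filterT | exists setT; first exact: filterT].
  - move=> S1 S2 [B1 GB1 [A1 qA1 s1]] [B2 GB2 [A2 qA2 s2]].
    exists (B1 `&` B2); first exact: filterI.
    exists (A1 `&` A2); first exact: filterI.
    move=> n [[B1n B2n] xA12]; split.
    + by apply: s1; split=> //; apply: filterS xA12 => ? [].
    + by apply: s2; split=> //; apply: filterS xA12 => ? [].
  - move=> S1 S2 sS12 [B GB [A qA s1]]; exists B => //; exists A => //.
    by move=> n /s1 /sS12.
have [p [pU sHp]] := ultraFilterLemma HF.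
exists p.
  split=> // B GB; apply: sHp; exists B => //; exists setT; first exact: filterT.
  by move=> ? [].
have addU := ultra_add_ultra pU xU.
apply: max_filter => A qA; apply: sHp; exists setT; first exact: filterT.
by exists A => // ? [].
Qed.

Lemma ultra_add_fixers_closed (G : set_system nat) x q : UltraFilter x ->
  ultra_over (ultra_meet [set y | ultra_over G y /\ ultra_add y x = x]) q ->
  ultra_over G q /\ ultra_add q x = x.
Proof.
move=> xU [qU sq]; split.
  by split=> // A GA; apply: sq => y [[_ sGy] _]; apply: sGy.
have addU := ultra_add_ultra qU xU.
apply: max_filter => A xA; apply: contrapT => nqxA.
have qxnA : ultra_add q x (~` A) by case: (in_ultra_setVsetC A addU).
apply: (ultra_setC qU qxnA); apply: sq => y [[yU _] yx].
have [yxnA|//] := in_ultra_setVsetC [set n | x (translate (~` A) n)] yU.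
by have := ultra_setC xU xA; rewrite -{1}yx.
Qed.

Section MinimalClosedSubsemigroup.
Variable M : set_system nat.
Hypothesis sgM : semigroup_filter M.
Hypothesis maxM : forall G, semigroup_filter G -> M `<=` G -> G `<=` M.

Lemma closed_subsemigroup_full (S : set (set_system nat)) :
  S `<=` ultra_over M -> S !=set0 ->
  (forall q, ultra_over (ultra_meet S) q -> S q) ->
  (forall p q, S p -> S q -> S (ultra_add p q)) ->
  ultra_over M `<=` S.
Proof.
move=> sSM [p0 Sp0] Sclosed Sadd.
have sMS : M `<=` ultra_meet S by move=> A MA p Sp; apply: (sSM p Sp).2.
have SU p : S p -> UltraFilter p by move=> /sSM [].
have meetF : ProperFilter (ultra_meet S).
  split.
    by move=> /(_ p0 Sp0) p00; have p0U := SU _ Sp0; apply: filter_not_empty p00.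
  split; first by move=> p /SU pU; apply: filterT.
  - move=> A B SA SB p Sp; have pU := SU _ Sp.
    exact: filterI (SA p Sp) (SB p Sp).
  - by move=> A B sAB SA p Sp; have pU := SU _ Sp; apply: filterS sAB (SA p Sp).
have sgS : semigroup_filter (ultra_meet S).
  split=> //; first by move=> A /(semigroup_filter_eventually sgM) /sMS.
  by move=> p q /Sclosed Sp /Sclosed Sq A SA; apply: SA (Sadd _ _ Sp Sq).
move=> q [qU sMq]; apply: Sclosed; split=> // A /(maxM sgS sMS); apply: sMq.
Qed.

End MinimalClosedSubsemigroup.

Lemma exists_idempotent_ultrafilter :
  exists p, [/\ UltraFilter p, \oo `<=` p & ultra_add p p = p].
Proof.
have [M [sgM maxM]] := exists_maximal_semigroup_filter.
have MF := semigroup_filter_proper sgM.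
have [x [xU sMx]] := ultraFilterLemma MF.
have xM : ultra_over M x by [].
(* [ultra_over M] is a minimal closed subsemigroup, so it equals both its right
   translate by x and the closed subsemigroup of its y with y + x = x. *)
have [y yM yx] : exists2 y, ultra_over M y & ultra_add y x = x.
  suff [y yM yx] : [set ultra_add p x | p in ultra_over M] x by exists y.
  apply: (closed_subsemigroup_full sgM maxM) xM.
  - by move=> _ [p pM <-]; apply: ultra_over_add.
  - by exists (ultra_add x x), x.
  - by move=> q /(ultra_add_image_closed _ xU) [p pM <-]; exists p.
  - move=> _ _ [p1 pM1 <-] [p2 pM2 <-]; exists (ultra_add (ultra_add p1 x) p2).
      by do 2![apply: ultra_over_add => //].
    by rewrite ultra_addA.
suff [_ xx] : [set y | ultra_over M y /\ ultra_add y x = x] x.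
  by exists x; split=> // A /(semigroup_filter_eventually sgM) /sMx.
apply: (closed_subsemigroup_full sgM maxM) xM.
- by move=> ? [].
- by exists y.
- by move=> q /(ultra_add_fixers_closed xU).
- move=> y1 y2 [yM1 e1] [yM2 e2]; split; first exact: ultra_over_add.
  by rewrite ultra_addA e2 e1.
Qed.

Section Hindman.
Variable p : set_system nat.
Hypotheses (pU : UltraFilter p) (sp : \oo `<=` p) (pp : ultra_add p p = p).

Definition star (A : set nat) : set nat := [set n | A n /\ p (translate A n)].

Lemma star_in A : p A -> p (star A).
Proof.
move=> pA; have ppA : ultra_add p p A by rewrite pp.
exact: filterI pA ppA.
Qed.

Lemma star_translate A n : star A n -> p (translate (star A) n).
Proof.
move=> [_ pAn]; apply: filterS _ (star_in pAn) => y [Any pAny].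
by split=> //; rewrite translateD in pAny.
Qed.

Lemma ultra_exists_pos A : p A -> exists n, 0 < n /\ A n.
Proof.
move=> pA; have p_gt0 : p [set n | 0 < n] by apply: sp; exists 1.
by have [n [An n_gt0]] := filter_ex (filterI pA p_gt0); exists n.
Qed.

Definition pick_pos (A : set nat) : nat := xget 0 [set n | 0 < n /\ A n].

Lemma pick_posP A : p A -> 0 < pick_pos A /\ A (pick_pos A).
Proof. by move/ultra_exists_pos/(xgetPex 0). Qed.

Fixpoint hindman_set (A : set nat) (i : nat) : set nat :=
  if i is i'.+1 then
    let B := star (hindman_set A i') in B `&` translate B (pick_pos B)
  else A.

Definition hindman_seq (A : set nat) (i : nat) : nat :=
  pick_pos (star (hindman_set A i)).

Lemma hindman_set_in A i : p A -> p (hindman_set A i).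
Proof.
move=> pA; elim: i => [//|i IH] /=.
have [_ Bpick] := pick_posP (star_in IH).
exact: filterI (star_in IH) (star_translate Bpick).
Qed.

Lemma hindman_seqP A i : p A ->
  0 < hindman_seq A i /\ star (hindman_set A i) (hindman_seq A i).
Proof. by move=> pA; apply/pick_posP/star_in/hindman_set_in. Qed.

Lemma star_hindman_setS A i :
  star (hindman_set A i.+1) `<=`
  star (hindman_set A i) `&` translate (star (hindman_set A i)) (hindman_seq A i).
Proof. by move=> n []. Qed.

Lemma star_hindman_set_mono A i j : i <= j ->
  star (hindman_set A j) `<=` star (hindman_set A i).
Proof.
move/subnK => <-; elim: (j - i) => [//|k IH] n /star_hindman_setS [+ _].
exact: IH.
Qed.

Lemma star_hindman_set_sums A i ns : p A -> sorted ltn (i :: ns) ->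
  star (hindman_set A i) (sumn (map (hindman_seq A) (i :: ns))).
Proof.
move=> pA; elim: ns i => [|j ns IH] i /=.
  by rewrite addn0 => _; case: (hindman_seqP i pA).
move=> /andP [lt_ij sorted_ns].
have := IH j sorted_ns.
by move=> /= /(star_hindman_set_mono lt_ij) /star_hindman_setS [_].
Qed.

End Hindman.

Lemma idempotent_finite_sums (p : set_system nat) (A : set nat) :
  UltraFilter p -> \oo `<=` p -> ultra_add p p = p -> p A ->
  exists m : nat -> nat, (forall i, 0 < m i) /\
    forall ns, ns != [::] -> sorted ltn ns -> A (sumn (map m ns)).
Proof.
move=> pU sp pp pA; exists (hindman_seq p A); split.
  by move=> i; case: (hindman_seqP pU sp pp i pA).
case=> [//|i ns] _ sorted_ns.
have := star_hindman_set_sums pU sp pp pA sorted_ns.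
by move/(@star_hindman_set_mono p A 0 i (leq0n i)) => [].
Qed.

Lemma ultra_fiber T (F : set_system T) (D : finType) (f : T -> D) :
  UltraFilter F -> exists d, F (f @^-1` [set d]).
Proof.
move=> FU; apply: contrapT => no_fiber.
have avoid (s : seq D) : F [set x | f x \notin s].
  elim: s => [|d s IH]; first by apply: filterS _ filterT.
  have Fnd : F (~` (f @^-1` [set d])).
    case: (in_ultra_setVsetC (f @^-1` [set d]) FU) => // Fd.
    by case: no_fiber; exists d.
  apply: filterS _ (filterI Fnd IH) => x [/eqP fxd fxs].
  by rewrite /= in_cons negb_or fxd.
apply: (filter_not_empty F); apply: filterS _ (avoid (enum D)) => x.
by rewrite /= mem_enum.
Qed.

Lemma iter_shift (A : Type) j (z : nat -> A) n :
  iter j (@shift A) z n = z (j + n).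
Proof. by elim: j n => [//|j IH] n /=; rewrite /shift IH addnS. Qed.

Lemma factor_cat (A : Type) (z : nat -> A) s l1 l2 :
  factor z s (l1 + l2) = factor z s l1 ++ factor z (s + l1) l2.
Proof.
rewrite /factor /mkseq iotaD map_cat add0n; congr (_ ++ _).
rewrite -[in iota l1 _](addn0 l1) iotaDl -map_comp.
by apply: eq_map => k /=; rewrite addnA.
Qed.

Section PeriodicWord.
Variables (A : Type) (a0 : A) (u : seq A).

Lemma omega_periodic d i : size u %| d -> omega a0 u (d + i) = omega a0 u i.
Proof. by case/dvdnP => c ->; rewrite /omega modnMDl. Qed.

Lemma factor_omega_periodic d s l :
  size u %| d -> factor (omega a0 u) (d + s) l = factor (omega a0 u) s l.
Proof. by move=> dvd_d; apply: eq_mkseq => k; rewrite -addnA omega_periodic. Qed.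

Lemma factor_omega_mod s l :
  factor (omega a0 u) (s %% size u) l = factor (omega a0 u) s l.
Proof.
by rewrite [in RHS](divn_eq s (size u)) factor_omega_periodic ?dvdn_mull.
Qed.

Definition blocks (m : nat -> nat) (j : nat) : nat -> seq A :=
  fun i => factor (omega a0 u) j (m i * size u).

Lemma flatten_blocks m j ms :
  flatten (map (blocks m j) ms) =
  factor (omega a0 u) j (sumn (map m ms) * size u).
Proof.
elim: ms => [|i ms IH] /=; first by rewrite /factor mul0n.
by rewrite IH mulnDl factor_cat addnC factor_omega_periodic ?dvdn_mull.
Qed.

Lemma ultra_mono_blocks (C : finType) (phi : seq A -> C) m j c :
  (forall ns, ns != [::] -> sorted ltn ns ->
     phi (factor (omega a0 u) j (sumn (map m ns) * size u)) = c) ->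
  ultra_mono phi (blocks m j).
Proof.
move=> sums_c; exists c => ns ms ns0 sorted_ns perm_ms.
by rewrite flatten_blocks (perm_sumn (perm_map m perm_ms)) sums_c.
Qed.

Lemma start_blocks_dvd m i : size u %| start (blocks m 0) i.
Proof. by apply: dvdn_sum => k _; rewrite size_mkseq dvdn_mull. Qed.

Lemma induced_blocks m j : induced (omega a0 u) (blocks m 0) j = blocks m j.
Proof.
apply/funext => i; rewrite /induced [in size _]/blocks size_mkseq.
apply: eq_mkseq => k; rewrite iter_shift addnCA omega_periodic //.
exact: start_blocks_dvd.
Qed.

Lemma is_factorization_blocks m : 0 < size u -> (forall i, 0 < m i) ->
  is_factorization (omega a0 u) (blocks m 0).
Proof.
move=> u_gt0 m_gt0; split=> [i|i]; first by rewrite size_mkseq muln_gt0 m_gt0.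
by have /(congr1 (fun W => W i)) := induced_blocks m 0.
Qed.

End PeriodicWord.

Theorem theorem3p5 (A : Type) (a0 : A) (C : finType) (phi : seq A -> C)
    (u : seq A) (hu : 0 < size u) :
  exists V : nat -> seq A, shift_inv_ultra_mono phi (omega a0 u) V.
Proof.
have [p [pU sp pp]] := exists_idempotent_ultrafilter.
pose col n := [ffun j : 'I_(size u) => phi (factor (omega a0 u) j (n * size u))].
have [d pd] := ultra_fiber col pU.
have [m [m_gt0 sums_d]] := idempotent_finite_sums pU sp pp pd.
have mono j : ultra_mono phi (blocks a0 u m j).
  apply: (ultra_mono_blocks (c := d (Ordinal (ltn_pmod j hu)))).
  move=> ns ns0 sorted_ns.
  by rewrite -(sums_d ns ns0 sorted_ns) ffunE factor_omega_mod.
exists (blocks a0 u m 0); split; first exact: is_factorization_blocks.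
by split=> // j _; rewrite induced_blocks.
Qed.
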